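(* Let $\mathcal{F}$ be a finite set of graphs, $T\ge0$, and let $(G_1,y_1),\dots,(G_s,y_s)\in\mathcal{G}_n\times\{0,1\}$ be a sample (with both labels occurring) such that $(\phi^{(T)}_{\mathsf{WLOA}}(G_i),y_i)_{i\le s}$ is linearly separable with margin $\gamma$. If $$\min_{y_i\ne y_j}\Big(\big\|\phi^{(T)}_{\mathsf{WLOA},\mathcal{F}}(G_i)-\phi^{(T)}_{\mathsf{WLOA},\mathcal{F}}(G_j)\big\|^2-\big\|\phi^{(T)}_{\mathsf{WLOA}}(G_i)-\phi^{(T)}_{\mathsf{WLOA}}(G_j)\big\|^2\Big)>\max_{y_i=y_j}\Big(\big\|\phi^{(T)}_{\mathsf{WLOA},\mathcal{F}}(G_i)-\phi^{(T)}_{\mathsf{WLOA},\mathcal{F}}(G_j)\big\|^2-\big\|\phi^{(T)}_{\mathsf{WLOA}}(G_i)-\phi^{(T)}_{\mathsf{WLOA}}(G_j)\big\|^2\Big),$$ then the margin $\lambda$ of the sample $(\phi^{(T)}_{\mathsf{WLOA},\mathcal{F}}(G_i),y_i)_{i\le s}$ satisfies $\lambda>\gamma$.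
   Context: $\mathcal{G}_n$ is the set of (unlabeled, simple, undirected) graphs on $n$ vertices. $1$-WL: $C^1_0$ constant, $C^1_t(v)=\mathsf{RELABEL}(C^1_{t-1}(v),\{\!\{C^1_{t-1}(u):u\in N(v)\}\!\})$ with a fixed injective $\mathsf{RELABEL}$ shared by all graphs. $1$-WL$_{\mathcal{F}}$: same update with initial colour $(\ell_F(v))_{F\in\mathcal{F}}$, $\ell_F(v)=1$ if $v$ lies in a vertex set $X$ with induced subgraph $G[X]$ isomorphic to $F$, else $0$. With $\phi_t(G)_c$ (resp. $\phi_{\mathcal{F},t}(G)_c$) the number of vertices of $G$ of colour $c$ at round $t$, $\phi^{(T)}_{\mathsf{WLOA}}(G)$ is the $0/1$ vector with one coordinate per $(t,c,j)$ ($t\le T$, $c$ a round-$t$ colour, $j\in\{1,\dots,n\}$) equal to $1$ iff $\phi_t(G)_c\ge j$; $\phi^{(T)}_{\mathsf{WLOA},\mathcal{F}}$ likewise from the $1$-WL$_{\mathcal{F}}$ counts. The margin of a linearly separable labelled sample is half the Euclidean distance between the convex hulls of the two classes (the hard-margin SVM margin). *)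

From HB Require Import structures.
From mathcomp Require Import all_boot all_order all_algebra.
From mathcomp Require Import classical_sets reals.
Set Implicit Arguments. Unset Strict Implicit. Unset Printing Implicit Defensive.
Import Order.TTheory GRing.Theory Num.Theory.
Local Open Scope ring_scope.

Record graph (n : nat) := Graph {
  adj : rel 'I_n;
  adj_sym : symmetric adj;
  adj_irr : irreflexive adj }.

Definition pattern := {k : nat & graph k}.

(** v lies in a vertex set X with G[X] isomorphic to F: X is the image of an
    injective map f : V(F) -> V(G) that is an isomorphism onto G[X]. *)
Definition in_induced_copy n (G : graph n) k (F : graph k) (v : 'I_n) : bool :=
  [exists f : {ffun 'I_k -> 'I_n},
     [&& injectiveb f, v \in codom f &
         [forall a, forall b, adj F a b == adj G (f a) (f b)]]].

Definition lbl (Fs : seq pattern) n (G : graph n) (v : 'I_n) : seq bool :=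
  [seq in_induced_copy G (projT2 F) v | F <- Fs].

Section WL.
Variable R : realType.
Variable C : eqType.
(* RELABEL; the multiset of neighbour colours is given as a list, and the
   theorem assumes RELABEL only depends on its multiset (perm_eq) and is
   injective on (colour, multiset) pairs. *)
Variable relabel : C -> seq C -> C.

Definition relabel_multiset :=
  forall c s t, perm_eq s t -> relabel c s = relabel c t.
Definition relabel_injective :=
  forall c d s t, relabel c s = relabel d t -> c = d /\ perm_eq s t.

Fixpoint wl_col n (G : graph n) (chi0 : 'I_n -> C) (t : nat) (v : 'I_n) : C :=
  match t with
  | 0 => chi0 v
  | t'.+1 => relabel (wl_col G chi0 t' v)
                     [seq wl_col G chi0 t' u | u <- enum 'I_n & adj G v u]
  end.

Definition wl_count n (G : graph n) chi0 t (c : C) : nat :=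
  #|[set v | wl_col G chi0 t v == c]|.

Definition wloa_feat n (G : graph n) chi0 (T : nat) (k : nat * C * nat) : R :=
  let: (t, c, j) := k in
  if [&& t <= T, 0 < j, j <= n & j <= wl_count G chi0 t c]%N then 1 else 0.

(** a finite list of coordinates outside of which wloa_feat vanishes *)
Definition wloa_supp n (G : graph n) chi0 (T : nat) : seq (nat * C * nat) :=
  flatten [seq [seq (t, wl_col G chi0 t v, j) | j <- iota 1 n]
          | t <- iota 0 T.+1, v <- enum 'I_n].
End WL.

Section Margin.
Variables (R : realType) (I : eqType).

Definition sqnorm (supp : seq I) (x : I -> R) : R :=
  \sum_(k <- undup supp) x k ^+ 2.

Definition sqdist (supp : seq I) (x y : I -> R) : R :=
  sqnorm supp (fun k => x k - y k).

Definition convex_weights s (ys : 'I_s -> bool) (lab : bool) (a : 'I_s -> R) :=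
  [/\ forall i, 0 <= a i, forall i, ys i != lab -> a i = 0 & \sum_i a i = 1].

Definition hull_dists (supp : seq I) s (xs : 'I_s -> I -> R) (ys : 'I_s -> bool)
  : set R :=
  [set d | exists a b, [/\ convex_weights ys true a, convex_weights ys false b &
     d = Num.sqrt (sqnorm supp (fun k => \sum_i a i * xs i k - \sum_i b i * xs i k))]].

(** hard-margin SVM margin: half the distance between the convex hulls *)
Definition margin (supp : seq I) s (xs : 'I_s -> I -> R) ys : R :=
  inf (hull_dists supp xs ys) / 2.

Definition lin_separable (supp : seq I) s (xs : 'I_s -> I -> R) (ys : 'I_s -> bool) :=
  exists (w : I -> R) (b : R), forall i,
    if ys i then b < \sum_(k <- undup supp) w k * xs i k
    else \sum_(k <- undup supp) w k * xs i k < b.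
End Margin.

Definition phi_WLOA (R : realType) (C : eqType) (relabel : C -> seq C -> C) (c0 : C)
  (T : nat) n (G : graph n) : nat * C * nat -> R :=
  wloa_feat R relabel G (fun _ => c0) T.
Definition phi_WLOA_F (R : realType) (C : eqType) (relabel : C -> seq C -> C)
  (init : seq bool -> C) (Fs : seq pattern) (T : nat) n (G : graph n)
  : nat * C * nat -> R :=
  wloa_feat R relabel G (fun v => init (lbl Fs G v)) T.

Definition supp_WLOA (C : eqType) (relabel : C -> seq C -> C) (c0 : C) (T : nat)
  n s (Gs : 'I_s -> graph n) : seq (nat * C * nat) :=
  flatten [seq wloa_supp relabel (Gs i) (fun _ => c0) T | i <- enum 'I_s].
Definition supp_WLOA_F (C : eqType) (relabel : C -> seq C -> C)
  (init : seq bool -> C) (Fs : seq pattern) (T : nat)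
  n s (Gs : 'I_s -> graph n) : seq (nat * C * nat) :=
  flatten [seq wloa_supp relabel (Gs i) (fun v => init (lbl Fs (Gs i) v)) T
          | i <- enum 'I_s].

(* Expanding the square, the squared distance between two convex combinations
   sum_i a_i x_i and sum_j b_j x_j is a fixed affine form in the pairwise squared
   distances |x_i - x_j|^2:
     sum_ij a_i b_j d_ij - 1/2 sum_ij a_i a_j d_ij - 1/2 sum_ij b_i b_j d_ij.
   Hence, for weights a on one class and b on the other, the squared hull
   distance computed from the enriched features exceeds the one computed from
   the plain features by the same form applied to the differences D_ij, which
   is at least min_{cross} D - max_{same} D > 0.  So every squared hull distance
   grows by a fixed positive amount, and so does the squared infimum. *)

From HB Require Import structures.
From mathcomp Require Import all_boot all_order all_algebra.
From mathcomp Require Import classical_sets reals.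
From mathcomp Require Import ring lra.
Import Order.TTheory GRing.Theory Num.Theory.
Set Implicit Arguments. Unset Strict Implicit.
Local Open Scope ring_scope.

Lemma finite_strict_gap (R : realDomainType) (I : finType) (P Q : pred I)
    (f : I -> R) p0 q0 :
  P p0 -> Q q0 -> (forall p q, P p -> Q q -> f q < f p) ->
  exists m M, [/\ M < m, forall p, P p -> m <= f p & forall q, Q q -> f q <= M].
Proof.
move=> Pp0 Qq0 ltQP.
have [p Pp minp] := @arg_minP _ R I p0 P f Pp0.
have [q Qq maxq] := @arg_maxP _ R I q0 Q f Qq0.
by exists (f p), (f q); split=> //; apply: ltQP.
Qed.

Section PairMean.
Variables (R : realFieldType) (s : nat).
Implicit Types (a b c : 'I_s -> R) (v : 'I_s -> R) (f g : 'I_s -> 'I_s -> R).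

Definition pair_mean a c f := \sum_i \sum_j a i * c j * f i j.

Definition hull_form a b f :=
  pair_mean a b f - 2^-1 * pair_mean a a f - 2^-1 * pair_mean b b f.

Lemma pair_mean_const a c m :
  pair_mean a c (fun _ _ => m) = (\sum_i a i) * (\sum_j c j) * m.
Proof.
by rewrite /pair_mean !mulr_suml; apply: eq_bigr => i _; rewrite mulr_sumr mulr_suml.
Qed.

Lemma pair_mean_sub a c f g :
  pair_mean a c (fun i j => f i j - g i j) = pair_mean a c f - pair_mean a c g.
Proof.
rewrite /pair_mean -sumrB; apply: eq_bigr => i _; rewrite -sumrB.
by apply: eq_bigr => j _; rewrite mulrBr.
Qed.

Lemma pair_mean_sum (J : Type) (r : seq J) a c (g : J -> 'I_s -> 'I_s -> R) :
  pair_mean a c (fun i j => \sum_(k <- r) g k i j) = \sum_(k <- r) pair_mean a c (g k).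
Proof.
rewrite /pair_mean; under eq_bigr do under eq_bigr do rewrite mulr_sumr.
by under eq_bigr do rewrite exchange_big /=; rewrite exchange_big.
Qed.

Lemma ler_pair_mean a c f g :
  (forall i, 0 <= a i) -> (forall j, 0 <= c j) ->
  (forall i j, a i != 0 -> c j != 0 -> f i j <= g i j) ->
  pair_mean a c f <= pair_mean a c g.
Proof.
move=> a_ge0 c_ge0 le_fg; apply: ler_sum => i _; apply: ler_sum => j _.
have [-> | ai_neq0] := eqVneq (a i) 0; first by rewrite !mul0r.
have [-> | cj_neq0] := eqVneq (c j) 0; first by rewrite mulr0 !mul0r.
by apply: ler_wpM2l; [apply: mulr_ge0 | apply: le_fg].
Qed.

Lemma pair_mean_sqr_diff a c v :
  pair_mean a c (fun i j => (v i - v j) ^+ 2) =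
  (\sum_i a i * v i ^+ 2) * (\sum_j c j) + (\sum_i a i) * (\sum_j c j * v j ^+ 2)
  - 2 * ((\sum_i a i * v i) * (\sum_j c j * v j)).
Proof.
have expand i j : a i * c j * (v i - v j) ^+ 2 =
    a i * v i ^+ 2 * c j + a i * (c j * v j ^+ 2) - 2 * (a i * v i * (c j * v j)).
  by ring.
rewrite /pair_mean; under eq_bigr do under eq_bigr do rewrite expand.
under eq_bigr do rewrite sumrB big_split /= -!mulr_sumr.
by rewrite sumrB big_split /= -!mulr_sumr -!mulr_suml.
Qed.

Lemma sqr_convex_diff a b v : \sum_i a i = 1 -> \sum_i b i = 1 ->
  (\sum_i a i * v i - \sum_i b i * v i) ^+ 2 =
  hull_form a b (fun i j => (v i - v j) ^+ 2).
Proof. by move=> suma sumb; rewrite /hull_form !pair_mean_sqr_diff suma sumb; field. Qed.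

Lemma hull_form_sub a b f g :
  hull_form a b (fun i j => f i j - g i j) = hull_form a b f - hull_form a b g.
Proof. by rewrite /hull_form !pair_mean_sub; ring. Qed.

Lemma hull_form_sum (J : Type) (r : seq J) a b (g : J -> 'I_s -> 'I_s -> R) :
  hull_form a b (fun i j => \sum_(k <- r) g k i j) = \sum_(k <- r) hull_form a b (g k).
Proof. by rewrite /hull_form !pair_mean_sum !mulr_sumr -!sumrB. Qed.

End PairMean.

Section ConvexHulls.
Variables (R : realType) (s : nat) (ys : 'I_s -> bool).
Implicit Types (a b : 'I_s -> R).

Definition hull_vec (I : Type) (xs : 'I_s -> I -> R) a b (k : I) : R :=
  \sum_i a i * xs i k - \sum_i b i * xs i k.

Lemma sqnorm_ge0 (I : eqType) (supp : seq I) (x : I -> R) : 0 <= sqnorm supp x.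
Proof. by apply: sumr_ge0 => k _; apply: sqr_ge0. Qed.

Lemma sqnorm_hull_vec (I : eqType) (supp : seq I) (xs : 'I_s -> I -> R) a b :
  \sum_i a i = 1 -> \sum_i b i = 1 ->
  sqnorm supp (hull_vec xs a b) = hull_form a b (fun i j => sqdist supp (xs i) (xs j)).
Proof.
move=> suma sumb; rewrite hull_form_sum.
by apply: eq_bigr => k _; rewrite sqr_convex_diff.
Qed.

Lemma convex_weights_label lab a i :
  convex_weights ys lab a -> a i != 0 -> ys i = lab.
Proof. by case=> _ a_out _ ai; apply/eqP; apply: contraNT ai => /a_out ->. Qed.

Lemma convex_weights_delta k : convex_weights ys (ys k) (fun i => (i == k)%:R : R).
Proof.
split=> [i | i | ]; first exact: ler0n.
  by case: (eqVneq i k) => [-> | //]; rewrite eqxx.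
by rewrite (bigD1 k) //= eqxx big1 ?addr0 // => i /negbTE ->.
Qed.

Lemma hull_form_gap a b (D : 'I_s -> 'I_s -> R) m M :
  convex_weights ys true a -> convex_weights ys false b ->
  (forall i j, ys i != ys j -> m <= D i j) ->
  (forall k l, ys k = ys l -> D k l <= M) ->
  m - M <= hull_form a b D.
Proof.
move=> wa wb Dcross Dsame.
have [a_ge0 _ suma] := wa; have [b_ge0 _ sumb] := wb.
have cross_ge : m <= pair_mean a b D.
  rewrite -[m]mul1r -[1]mul1r -{1}suma -sumb -pair_mean_const.
  apply: ler_pair_mean => // i j ai bj; apply: Dcross.
  by rewrite (convex_weights_label wa ai) (convex_weights_label wb bj).
have same_le lab c : convex_weights ys lab c -> pair_mean c c D <= M.
  move=> wc; have [c_ge0 _ sumc] := wc.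
  rewrite -[M]mul1r -[1]mul1r -sumc -pair_mean_const.
  apply: ler_pair_mean => // i j ci cj; apply: Dsame.
  by rewrite (convex_weights_label wc ci) (convex_weights_label wc cj).
have := same_le _ _ wa; have := same_le _ _ wb; rewrite /hull_form; lra.
Qed.

Section Margins.
Variables (i1 i0 : 'I_s).
Hypotheses (ys_i1 : ys i1) (ys_i0 : ~~ ys i0).

Lemma hull_dists_nonempty (I : eqType) (supp : seq I) (xs : 'I_s -> I -> R) :
  (hull_dists supp xs ys !=set0)%classic.
Proof.
exists (Num.sqrt (sqnorm supp (hull_vec xs (fun i => (i == i1)%:R)
                                           (fun i => (i == i0)%:R)))).
exists (fun i => (i == i1)%:R), (fun i => (i == i0)%:R); split=> //.
  by rewrite -ys_i1; apply: convex_weights_delta.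
by rewrite -(negbTE ys_i0); apply: convex_weights_delta.
Qed.

Lemma hull_dists_ge0 (I : eqType) (supp : seq I) (xs : 'I_s -> I -> R) :
  lbound (hull_dists supp xs ys) 0.
Proof. by move=> _ [a [b [_ _ ->]]]; apply: sqrtr_ge0. Qed.

Lemma margin_lt_of_hull_gap (I J : eqType) (supp : seq I) (supp' : seq J)
    (xs : 'I_s -> I -> R) (xs' : 'I_s -> J -> R) (delta : R) :
  0 < delta ->
  (forall a b, convex_weights ys true a -> convex_weights ys false b ->
     sqnorm supp (hull_vec xs a b) + delta <= sqnorm supp' (hull_vec xs' a b)) ->
  margin supp xs ys < margin supp' xs' ys.
Proof.
move=> delta_gt0 gap.
set g := inf (hull_dists supp xs ys).
have g_ge0 : 0 <= g.
  exact: lb_le_inf (hull_dists_nonempty supp xs) (@hull_dists_ge0 _ supp xs).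
have lb : lbound (hull_dists supp' xs' ys) (Num.sqrt (g ^+ 2 + delta)).
  move=> _ [a [b [wa wb ->]]]; rewrite ler_sqrt ?sqnorm_ge0 //.
  have g_le : g <= Num.sqrt (sqnorm supp (hull_vec xs a b)).
    by apply: ge_inf; [exists 0; apply: hull_dists_ge0 | exists a, b].
  have g2_le : g ^+ 2 <= sqnorm supp (hull_vec xs a b).
    by rewrite -(sqr_sqrtr (sqnorm_ge0 _ _)) lerXn2r // nnegrE sqrtr_ge0.
  by have := gap a b wa wb; lra.
have : g < inf (hull_dists supp' xs' ys).
  apply: lt_le_trans (lb_le_inf (hull_dists_nonempty _ _) lb).
  by rewrite -[X in X < _]ger0_norm // -sqrtr_sqr ltr_sqrt ?ltrDl // ltr_wpDl ?sqr_ge0.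
by rewrite /margin -/g; lra.
Qed.

End Margins.
End ConvexHulls.

Theorem theorem17 (R : realType) (C : eqType) (relabel : C -> seq C -> C)
  (c0 : C) (init : seq bool -> C)
  (Hms : relabel_multiset relabel) (Hinj : relabel_injective relabel)
  (Hinit : injective init)
  (Fs : seq pattern) (T n s : nat) (Gs : 'I_s -> graph n) (ys : 'I_s -> bool)
  (gamma : R) :
  let x := fun i => phi_WLOA R relabel c0 T (Gs i) in
  let xF := fun i => phi_WLOA_F R relabel init Fs T (Gs i) in
  let S := supp_WLOA relabel c0 T Gs in
  let SF := supp_WLOA_F relabel init Fs T Gs in
  let D := fun i j => sqdist SF (xF i) (xF j) - sqdist S (x i) (x j) in
  (exists i, ys i) -> (exists i, ~~ ys i) ->
  lin_separable S x ys -> gamma = margin S x ys ->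
  (forall i j k l, ys i != ys j -> ys k = ys l -> D k l < D i j) ->
  gamma < margin SF xF ys.
Proof.
move=> x xF S SF D [i1 ys_i1] [i0 ys_i0] _ -> D_gap.
have cross10 : ys i1 != ys i0 by rewrite ys_i1; case: (ys i0) ys_i0.
have [m [M [ltMm Dcross Dsame]]] :=
  @finite_strict_gap R _ (fun p : 'I_s * 'I_s => ys p.1 != ys p.2)
    (fun p => ys p.1 == ys p.2) (fun p => D p.1 p.2) (i1, i0) (i1, i1) cross10
    (eqxx _) (fun p q cp sq => D_gap _ _ _ _ cp (eqP sq)).
apply: (margin_lt_of_hull_gap ys_i1 ys_i0 (delta := m - M)) => [|a b wa wb].
  by rewrite subr_gt0.
have := hull_form_gap wa wb (fun i j => Dcross (i, j))
  (fun k l e => Dsame (k, l) (introT eqP e)).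
have [_ _ suma] := wa; have [_ _ sumb] := wb.
by rewrite hull_form_sub !sqnorm_hull_vec //; lra.
Qed.
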